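(* A TDLC-group $G$ is compact (i.e. profinite) if and only if $G$ is compactly generated and satisfies the weak $0$-dimensional linear isoperimetric inequality.
   Context: A TDLC-group is a totally disconnected locally compact Hausdorff topological group. A discrete $\mathbb{Q}[G]$-module is a left $\mathbb{Q}[G]$-module in which every element has open stabilizer. A $G$-set $\Omega$ is proper if all point stabilizers are compact open; $\mathbb{Q}[\Omega]$ is then a proper permutation module, finitely generated iff $\Omega/G$ is finite, with $\ell_1$-norm $\|\sum a_\omega\omega\|_1=\sum|a_\omega|$. A compactly generated TDLC-group admits an exact sequence $\mathbb{Q}[\Omega_1]\xrightarrow{\delta_1}\mathbb{Q}[\Omega_0]\xrightarrow{\delta_0}\mathbb{Q}\to0$ of discrete modules with $\Omega_0,\Omega_1$ proper $G$-sets with finitely many orbits (type $\mathrm{FP}_1$; e.g. the augmented cellular chain complex of a Cayley–Abels graph). $G$ satisfies the weak $0$-dimensional linear isoperimetric inequality if for some (equivalently any) such sequence there is $C>0$ with $\inf\{\|y\|_1: y\in\mathbb{Q}[\Omega_1],\ \delta_1(y)=x\}\le C\|x\|_1$ for all $x\in\ker\delta_0$. *)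

From HB Require Import structures.
From mathcomp Require Import all_boot all_order all_algebra.
From Stdlib Require Import ClassicalEpsilon.
Set Implicit Arguments. Unset Strict Implicit. Unset Printing Implicit Defensive.
Import Order.TTheory GRing.Theory Num.Theory.
Local Open Scope ring_scope.

Record TopGroup := {
  tg_car :> Type;
  tg_mul : tg_car -> tg_car -> tg_car;
  tg_inv : tg_car -> tg_car;
  tg_one : tg_car;
  tg_mulA : forall x y z, tg_mul x (tg_mul y z) = tg_mul (tg_mul x y) z;
  tg_mul1g : forall x, tg_mul tg_one x = x;
  tg_mulg1 : forall x, tg_mul x tg_one = x;
  tg_mulVg : forall x, tg_mul (tg_inv x) x = tg_one;
  tg_mulgV : forall x, tg_mul x (tg_inv x) = tg_one;
  tg_open : (tg_car -> Prop) -> Prop;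
  tg_open_setT : tg_open (fun _ => True);
  tg_open_union : forall F : (tg_car -> Prop) -> Prop,
      (forall U, F U -> tg_open U) -> tg_open (fun x => exists U, F U /\ U x);
  tg_open_inter : forall U V, tg_open U -> tg_open V ->
      tg_open (fun x => U x /\ V x);
  (* continuity of multiplication G x G -> G (product topology) *)
  tg_mul_cont : forall U x y, tg_open U -> U (tg_mul x y) ->
      exists V W, [/\ tg_open V, tg_open W, V x, W y &
                     forall a b, V a -> W b -> U (tg_mul a b)];
  tg_inv_cont : forall U, tg_open U -> tg_open (fun x => U (tg_inv x))
}.

Section TopDefs.
Variable G : TopGroup.

Definition compact_set (K : G -> Prop) : Prop :=
  forall F : (G -> Prop) -> Prop,
    (forall U, F U -> @tg_open G U) ->
    (forall x, K x -> exists U, F U /\ U x) ->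
    exists s : list (G -> Prop),
      (forall U, List.In U s -> F U) /\
      (forall x, K x -> exists U, List.In U s /\ U x).

Definition hausdorff : Prop :=
  forall x y : G, x <> y -> exists U V, [/\ @tg_open G U, @tg_open G V, U x, V y &
                                       forall z, U z -> V z -> False].

Definition locally_compact : Prop :=
  forall x : G, exists U K, [/\ @tg_open G U, compact_set K, U x &
                                forall z, U z -> K z].

Definition connected_set (S : G -> Prop) : Prop :=
  forall U V, @tg_open G U -> @tg_open G V ->
    (forall x, S x -> U x \/ V x) ->
    (exists x, S x /\ U x) -> (exists x, S x /\ V x) ->
    exists x, [/\ S x, U x & V x].

Definition totally_disconnected : Prop :=
  forall S, connected_set S -> forall x y, S x -> S y -> x = y.

Definition TDLC : Prop := [/\ hausdorff, locally_compact & totally_disconnected].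

Definition compact_group : Prop := compact_set (fun _ => True).

Definition gprod (l : list G) : G := List.fold_right (@tg_mul G) (tg_one G) l.

Definition generates (K : G -> Prop) : Prop :=
  forall g : G, exists l : list G,
    (forall h, List.In h l -> K h \/ K (@tg_inv G h)) /\ g = gprod l.

Definition compactly_generated : Prop :=
  exists K, compact_set K /\ generates K.

Definition is_action (Om : Type) (act : G -> Om -> Om) : Prop :=
  (forall w, act (tg_one G) w = w) /\
  (forall g h w, act (@tg_mul G g h) w = act g (act h w)).

Definition stabilizer (Om : Type) (act : G -> Om -> Om) (w : Om) : G -> Prop :=
  fun g => act g w = w.

Definition proper_Gset (Om : Type) (act : G -> Om -> Om) : Prop :=
  is_action act /\
  forall w, @tg_open G (stabilizer act w) /\ compact_set (stabilizer act w).

Definition finitely_many_orbits (Om : Type) (act : G -> Om -> Om) : Prop :=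
  exists s : list Om, forall w, exists v g, List.In v s /\ act g v = w.

End TopDefs.

(** * Permutation modules Q[Om] : finitely supported functions Om -> rat *)
Section PermMod.
Variable Om : eqType.

Definition finsupp (f : Om -> rat) : Prop :=
  exists s : seq Om, forall w, f w != 0 -> w \in s.

Definition supp_seq (f : Om -> rat) : seq Om :=
  match excluded_middle_informative (finsupp f) with
  | left H => proj1_sig (constructive_indefinite_description _ H)
  | right _ => [::]
  end.

Definition l1norm (f : Om -> rat) : rat :=
  \sum_(w <- undup (supp_seq f)) `|f w|.

End PermMod.

Section Modules.
Variable G : TopGroup.

(** action of G on Q[Om]:  (g . f)(w) = f(g^-1 . w), i.e. g . (sum a_w w) = sum a_w (g w) *)
Definition pmod_act (Om : Type) (act : G -> Om -> Om) (g : G) (f : Om -> rat) : Om -> rat :=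
  fun w => f (act (@tg_inv G g) w).

Definition pmod_hom (Om1 Om0 : eqType) (act1 : G -> Om1 -> Om1) (act0 : G -> Om0 -> Om0)
    (d : (Om1 -> rat) -> (Om0 -> rat)) : Prop :=
  [/\ forall y, finsupp y -> finsupp (d y),
      forall y z, finsupp y -> finsupp z ->
        forall w, d (fun v => y v + z v) w = d y w + d z w,
      forall (a : rat) y, finsupp y -> forall w, d (fun v => a * y v) w = a * d y w &
      forall g y, finsupp y -> forall w, d (pmod_act act1 g y) w = pmod_act act0 g (d y) w].

Definition aug_hom (Om0 : eqType) (act0 : G -> Om0 -> Om0) (d : (Om0 -> rat) -> rat) : Prop :=
  [/\ forall y z, finsupp y -> finsupp z -> d (fun v => y v + z v) = d y + d z,
      forall (a : rat) y, finsupp y -> d (fun v => a * y v) = a * d y &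
      forall g y, finsupp y -> d (pmod_act act0 g y) = d y].

Definition exact_FP1 (Om1 Om0 : eqType) (d1 : (Om1 -> rat) -> (Om0 -> rat))
    (d0 : (Om0 -> rat) -> rat) : Prop :=
  [/\ forall q : rat, exists x, finsupp x /\ d0 x = q,
      forall y, finsupp y -> d0 (d1 y) = 0 &
      forall x, finsupp x -> d0 x = 0 ->
        exists y, finsupp y /\ forall w, d1 y w = x w].

Definition FP1_resolution (Om1 Om0 : eqType) (act1 : G -> Om1 -> Om1)
    (act0 : G -> Om0 -> Om0) (d1 : (Om1 -> rat) -> (Om0 -> rat))
    (d0 : (Om0 -> rat) -> rat) : Prop :=
  [/\ proper_Gset act1 /\ finitely_many_orbits act1,
      proper_Gset act0 /\ finitely_many_orbits act0,
      pmod_hom act1 act0 d1, aug_hom act0 d0 & exact_FP1 d1 d0].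

(** weak 0-dimensional linear isoperimetric inequality (for some such sequence):
    inf { ||y||_1 : d1 y = x } <= C ||x||_1 for all x in ker d0. *)
Definition weak_lin_isoperimetric : Prop :=
  exists (Om1 Om0 : eqType) (act1 : G -> Om1 -> Om1) (act0 : G -> Om0 -> Om0)
         (d1 : (Om1 -> rat) -> (Om0 -> rat)) (d0 : (Om0 -> rat) -> rat),
    FP1_resolution act1 act0 d1 d0 /\
    exists C : rat, 0 < C /\
      forall x, finsupp x -> d0 x = 0 ->
        forall eps : rat, 0 < eps ->
          exists y, [/\ finsupp y, (forall w, d1 y w = x w) &
                        l1norm y <= C * l1norm x + eps].

End Modules.

(** If G is compact, the trivial G-set [unit] gives the exact sequence
    0 -> Q -> Q -> 0, for which the inequality holds with C = 1; G itself is a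
    compact generating set.

    Conversely let Q[Om1] -d1-> Q[Om0] -d0-> Q -> 0 be an FP1-resolution
    satisfying the inequality with constant C, and assume G is not compact.
    Call two points of Om0 adjacent when they lie in the support of a common
    boundary d1(v), v in Om1.  Since Om1 has finitely many orbits and all
    stabilizers are compact open, this relation is locally finite, so balls
    around a point w0 with d0(w0) = c <> 0 are finite; as the orbit of w0 is
    infinite (stabilizers are compact), there are points g.w0 at distance > N
    for every N.  The "cut" functional Phi_N(f) = sum_{k<N} d0(f off B_k) takes
    the value -N c on the dipole w0 - g.w0, while on each boundary d1(v) at
    most one of its N terms is nonzero, so |Phi_N(d1 y)| <= W ||y||_1 for a
    constant W independent of N.  Solving d1 y = w0 - g.w0 with
    ||y||_1 <= 2C + 1 yields N |c| <= W (2C + 1), absurd for N large.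
    Neither direction uses that G is TDLC. *)
From mathcomp Require Import all_boot all_order all_algebra.
From Stdlib Require Import ClassicalEpsilon FunctionalExtensionality PropExtensionality Classical.
From Stdlib Require List.
Set Implicit Arguments. Unset Strict Implicit. Unset Printing Implicit Defensive.
Import Order.TTheory GRing.Theory Num.Theory.
Local Open Scope ring_scope.
From mathcomp Require Import lra.

Definition delta (Om : eqType) (u : Om) : Om -> rat := fun w => if w == u then 1 else 0.

Definition supp_in (Om : eqType) (f : Om -> rat) (s : seq Om) := forall w, f w != 0 -> w \in s.

Lemma supp_seqP (Om : eqType) (f : Om -> rat) : finsupp f -> supp_in f (supp_seq f).
Proof.
move=> H; rewrite /supp_seq; case: excluded_middle_informative => // H'.
by case: (constructive_indefinite_description _ H').
Qed.

Lemma supp_undup (Om : eqType) (f : Om -> rat) : finsupp f -> supp_in f (undup (supp_seq f)).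
Proof. by move=> H w /(supp_seqP H); rewrite mem_undup. Qed.

Lemma finsupp_delta (Om : eqType) (u : Om) : finsupp (delta u).
Proof. by exists [:: u] => w; rewrite /delta; case: (w =P u) => [->|]; rewrite ?mem_seq1 ?eqxx. Qed.

Lemma finsupp0 (Om : eqType) : finsupp (fun _ : Om => 0).
Proof. by exists [::] => w; rewrite eqxx. Qed.

Lemma finsupp_scale (Om : eqType) (a : rat) (f : Om -> rat) :
  finsupp f -> finsupp (fun v => a * f v).
Proof. by case=> s Hs; exists s => w; rewrite mulf_eq0 negb_or => /andP[_]; apply: Hs. Qed.

Lemma finsupp_add (Om : eqType) (f g : Om -> rat) :
  finsupp f -> finsupp g -> finsupp (fun v => f v + g v).
Proof.
case=> s Hs [t Ht]; exists (s ++ t) => w H; rewrite mem_cat.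
case: (f w =P 0) => [E|/eqP E]; last by rewrite Hs.
by move: H; rewrite E add0r => /Ht ->; rewrite orbT.
Qed.

Definition linear_on (Om : eqType) (L : (Om -> rat) -> rat) :=
  (forall y z, finsupp y -> finsupp z -> L (fun v => y v + z v) = L y + L z) /\
  (forall (a : rat) y, finsupp y -> L (fun v => a * y v) = a * L y).

Lemma lin0 (Om : eqType) (L : (Om -> rat) -> rat) : linear_on L -> L (fun _ => 0) = 0.
Proof.
case=> _ Hs; have E := Hs 0 _ (finsupp0 Om).
have E2 : (fun v : Om => 0 * 0) = (fun _ => 0 : rat).
  by apply: functional_extensionality => v; rewrite mul0r.
by rewrite E2 mul0r in E.
Qed.

Lemma lin_expand (Om : eqType) (L : (Om -> rat) -> rat) : linear_on L ->
  forall s f, uniq s -> supp_in f s -> L f = \sum_(u <- s) f u * L (delta u).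
Proof.
move=> [Ladd Lscale]; elim=> [|u s IH] f Hu Hf.
  rewrite big_nil; have -> : f = (fun _ => 0); last exact: lin0.
  apply: functional_extensionality => w; apply/eqP; apply: contraT => /Hf.
  by rewrite in_nil.
move: Hu => /= /andP[us Hu].
pose f' := fun w => if w == u then 0 else f w.
have sf' : supp_in f' s.
  move=> w; rewrite /f'; case: ifP => [_|ne]; first by rewrite eqxx.
  by move/Hf; rewrite in_cons ne.
have Ef : f = (fun w => f' w + f u * delta u w).
  apply: functional_extensionality => w; rewrite /f' /delta.
  case: (w =P u) => [->|/eqP ne]; first by rewrite mulr1 add0r.
  by rewrite mulr0 addr0.
rewrite {1}Ef Ladd; [|by exists s|by apply/finsupp_scale/finsupp_delta].
rewrite Lscale ?big_cons 1?addrC ?(IH f' Hu sf'); last exact: finsupp_delta.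
congr (_ + _); apply: eq_big_seq => x xs; rewrite /f'; case: (x =P u) => [ex|//].
by rewrite -ex xs in us.
Qed.

Definition zero_on (Om : Type) (D : Om -> Prop) (f : Om -> rat) : Om -> rat :=
  fun w => if excluded_middle_informative (D w) then 0 else f w.

Lemma zero_on_supp (Om : eqType) (D : Om -> Prop) f s : supp_in f s -> supp_in (zero_on D f) s.
Proof.
move=> H w; rewrite /zero_on; case: excluded_middle_informative => [?|?]; last exact: H.
by rewrite eqxx.
Qed.

Lemma finsupp_zero_on (Om : eqType) (D : Om -> Prop) f : finsupp f -> finsupp (zero_on D f).
Proof. by case=> s Hs; exists s; apply: zero_on_supp. Qed.

Lemma lin_zero_on (Om : eqType) (L : (Om -> rat) -> rat) (D : Om -> Prop) :
  linear_on L -> linear_on (fun f => L (zero_on D f)).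
Proof.
case=> Ha Hs; split.
  move=> y z fy fz; rewrite -Ha; try exact: finsupp_zero_on.
  congr L; apply: functional_extensionality => w; rewrite /zero_on.
  by case: excluded_middle_informative => [?|?] //; rewrite addr0.
move=> a y fy; rewrite -Hs; last exact: finsupp_zero_on.
congr L; apply: functional_extensionality => w; rewrite /zero_on.
by case: excluded_middle_informative => [?|?] //; rewrite mulr0.
Qed.

Lemma lin_sum (Om : eqType) (N : nat) (L : nat -> (Om -> rat) -> rat) :
  (forall k, linear_on (L k)) -> linear_on (fun f => \sum_(k < N) L k f).
Proof.
move=> HL; split.
  move=> y z fy fz; rewrite -big_split /=; apply: eq_bigr => k _.
  by case: (HL k) => Ha _; rewrite Ha.
move=> a y fy; rewrite mulr_sumr; apply: eq_bigr => k _.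
by case: (HL k) => _ Hs; rewrite Hs.
Qed.

Lemma lin_comp (Om1 Om0 : eqType) (d1 : (Om1 -> rat) -> (Om0 -> rat))
    (L : (Om0 -> rat) -> rat) :
  (forall y, finsupp y -> finsupp (d1 y)) ->
  (forall y z, finsupp y -> finsupp z -> forall w, d1 (fun v => y v + z v) w = d1 y w + d1 z w) ->
  (forall (a : rat) y, finsupp y -> forall w, d1 (fun v => a * y v) w = a * d1 y w) ->
  linear_on L -> linear_on (fun y => L (d1 y)).
Proof.
move=> Hf Ha Hs [La Ls]; split.
  move=> y z fy fz.
  have -> : d1 (fun v => y v + z v) = (fun w => d1 y w + d1 z w).
    by apply: functional_extensionality => w; apply: Ha.
  by rewrite La //; apply: Hf.
move=> a y fy.
have -> : d1 (fun v => a * y v) = (fun w => a * d1 y w).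
  by apply: functional_extensionality => w; apply: Hs.
by rewrite Ls //; apply: Hf.
Qed.

Lemma zero_on_bound (Om : eqType) (L : (Om -> rat) -> rat) (D : Om -> Prop) f s :
  linear_on L -> uniq s -> supp_in f s ->
  `|L (zero_on D f)| <= \sum_(u <- s) `|f u| * `|L (delta u)|.
Proof.
move=> HL us Hf; rewrite (lin_expand HL us (zero_on_supp (D := D) Hf)).
apply: le_trans (ler_norm_sum _ _ _) _; apply: ler_sum => u _.
rewrite normrM ler_wpM2r // /zero_on.
by case: excluded_middle_informative => [?|?] //; rewrite normr0.
Qed.

Lemma sum_delta_le1 (Om : eqType) (a : Om) s : uniq s -> \sum_(w <- s) delta a w <= 1.
Proof.
elim: s => [|y s IH] /=; first by rewrite big_nil.
move=> /andP[ys us]; rewrite big_cons /delta.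
case: (y =P a) => [Ey|_]; last by rewrite add0r; apply: IH.
rewrite big1_seq ?addr0 // => w /andP[_ ws].
by case: (w =P a) => // Ew; move: ys; rewrite Ey -Ew ws.
Qed.

Lemma delta_ge0 (Om : eqType) (a w : Om) : 0 <= delta a w.
Proof. by rewrite /delta; case: (w == a). Qed.

Definition dipole (Om : eqType) (a b : Om) : Om -> rat := fun w => delta a w + (-1) * delta b w.

Lemma finsupp_dipole (Om : eqType) (a b : Om) : finsupp (dipole a b).
Proof. by apply: finsupp_add; [|apply: finsupp_scale]; apply: finsupp_delta. Qed.

Lemma l1norm_dipole (Om : eqType) (a b : Om) : l1norm (dipole a b) <= 2.
Proof.
rewrite /l1norm /dipole; set s := undup _; have us : uniq s by apply: undup_uniq.
apply: (@le_trans _ _ (\sum_(w <- s) (delta a w + delta b w))).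
  apply: ler_sum => w _; apply: le_trans (ler_normD _ _) _.
  by rewrite normrM normrN1 mul1r !ger0_norm ?delta_ge0.
rewrite big_split /=; have h1 := sum_delta_le1 a us; have h2 := sum_delta_le1 b us.
by apply: le_trans (lerD h1 h2) _; rewrite (_ : 1 + 1 = 2).
Qed.

Definition finite_pred (T : Type) (P : T -> Prop) := exists L : list T, forall t, P t -> List.In t L.

Lemma list_choice (A B : Type) (R : A -> B -> Prop) (l : list A) :
  (forall a, List.In a l -> exists b, R a b) ->
  exists l' : list B, (forall a, List.In a l -> exists b, List.In b l' /\ R a b) /\
                      (forall b, List.In b l' -> exists a, List.In a l /\ R a b).
Proof.
elim: l => [|a l IH] H; first by exists nil; split=> ? [].
have [b Hb] := H a (or_introl erefl).
have [l' [H1 H2]] := IH (fun a' h => H a' (or_intror h)).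
exists (b :: l'); split.
  move=> a' [<-|h]; first by exists b; split=> //; left.
  by have [b' [? ?]] := H1 a' h; exists b'; split=> //; right.
move=> b' [<-|h]; first by exists a; split=> //; left.
by have [a' [? ?]] := H2 b' h; exists a'; split=> //; right.
Qed.

Lemma finite_bigcup (A T : Type) (l : list A) (P : A -> T -> Prop) :
  (forall a, List.In a l -> finite_pred (P a)) ->
  finite_pred (fun t => exists a, List.In a l /\ P a t).
Proof.
move=> H; have [l' [H1 _]] := @list_choice _ _ (fun a L => forall t, P a t -> List.In t L) l H.
exists (List.concat l') => t [a [la Pt]]; have [L [lL HL]] := H1 a la.
by apply/List.in_concat; exists L; split=> //; apply: HL.
Qed.

Lemma finite_sub (T : Type) (P Q : T -> Prop) :
  (forall t, P t -> Q t) -> finite_pred Q -> finite_pred P.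
Proof. by move=> PQ [L HL]; exists L => t /PQ /HL. Qed.

Lemma In_mem (T : eqType) (x : T) s : x \in s -> List.In x s.
Proof. elim: s => //= y s IH; rewrite in_cons => /orP[/eqP ->|/IH]; [by left|by right]. Qed.

Lemma gmulK (G : TopGroup) (k x : G) : tg_mul k (tg_mul (tg_inv k) x) = x.
Proof. by rewrite tg_mulA tg_mulgV tg_mul1g. Qed.

Lemma gmulKV (G : TopGroup) (k x : G) : tg_mul (tg_inv k) (tg_mul k x) = x.
Proof. by rewrite tg_mulA tg_mulVg tg_mul1g. Qed.

Lemma actK (G : TopGroup) (Om : Type) (act : G -> Om -> Om) g w :
  is_action act -> act g (act (tg_inv g) w) = w.
Proof. by case=> H1 HM; rewrite -HM tg_mulgV H1. Qed.

Lemma actKV (G : TopGroup) (Om : Type) (act : G -> Om -> Om) g w :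
  is_action act -> act (tg_inv g) (act g w) = w.
Proof. by case=> H1 HM; rewrite -HM tg_mulVg H1. Qed.

Lemma open_transl (G : TopGroup) (U : G -> Prop) (a : G) :
  tg_open U -> tg_open (fun x => U (tg_mul a x)).
Proof.
move=> HU.
pose F := fun W : G -> Prop => tg_open W /\ forall b, W b -> U (tg_mul a b).
have -> : (fun x => U (tg_mul a x)) = (fun x => exists W, F W /\ W x).
  apply: functional_extensionality => x; apply: propositional_extensionality; split.
    move=> Hx; have [V [W [oV oW Va Wx HVW]]] := tg_mul_cont HU Hx.
    by exists W; split=> //; split=> // b Wb; apply: HVW.
  by case=> W [[_ HW] Wx]; apply: HW.
by apply: tg_open_union => W [].
Qed.

Lemma compact_transl (G : TopGroup) (K : G -> Prop) (b : G) :
  compact_set K -> compact_set (fun x => K (tg_mul b x)).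
Proof.
move=> HK F oF cov.
pose tr := fun U : G -> Prop => fun z => U (tg_mul (tg_inv b) z).
pose F' := fun V : G -> Prop => exists U, F U /\ V = tr U.
have oF' : forall V, F' V -> tg_open V.
  by move=> V [U [FU ->]]; apply: open_transl; apply: oF.
have cov' : forall z, K z -> exists V, F' V /\ V z.
  move=> z Kz; have : K (tg_mul b (tg_mul (tg_inv b) z)) by rewrite gmulK.
  by move/cov => [U [FU HU]]; exists (tr U); split=> //; exists U.
have [s [Hs1 Hs2]] := HK F' oF' cov'.
have [l' [H1 H2]] := @list_choice _ _ (fun V U => F U /\ V = tr U) s Hs1.
exists l'; split; first by move=> U /H2 [V [_ []]].
move=> x Kx; have [V [sV Vx]] := Hs2 _ Kx; have [U [l'U [_ EV]]] := H1 V sV.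
by exists U; split=> //; move: Vx; rewrite EV /tr gmulKV.
Qed.

Lemma compact_fin_union (G : TopGroup) (Ks : list (G -> Prop)) :
  (forall K, List.In K Ks -> compact_set K) ->
  compact_set (fun x => exists K, List.In K Ks /\ K x).
Proof.
move=> HK F oF cov.
have [l' [H1 H2]] := @list_choice _ _ (fun K (s : list (G -> Prop)) =>
    (forall U, List.In U s -> F U) /\ (forall x, K x -> exists U, List.In U s /\ U x)) Ks
  (fun K h => HK K h F oF (fun x Kx => cov x (ex_intro _ K (conj h Kx)))).
exists (List.concat l'); split.
  move=> U /List.in_concat [s [ls Us]].
  by have [K [_ [HF _]]] := H2 s ls; apply: HF.
move=> x [K [iK Kx]]; have [s [ls [_ Hc]]] := H1 K iK.
have [U [Us Ux]] := Hc x Kx.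
by exists U; split=> //; apply/List.in_concat; exists s.
Qed.

(** a compact set moves a point with open stabilizer to finitely many points:
    K is covered by finitely many cosets k Stab(b) *)
Lemma orbit_fin (G : TopGroup) (Om : Type) (act : G -> Om -> Om) (K : G -> Prop) (b : Om) :
  is_action act -> compact_set K -> tg_open (stabilizer act b) ->
  finite_pred (fun p => exists k, K k /\ act k b = p).
Proof.
move=> Hact HK Ho.
pose coset := fun k x => stabilizer act b (tg_mul (tg_inv k) x).
pose F := fun U : G -> Prop => exists k, K k /\ U = coset k.
have oF : forall U, F U -> tg_open U by move=> U [k [_ ->]]; apply: open_transl.
have cov : forall k, K k -> exists U, F U /\ U k.
  move=> k Kk; exists (coset k); split; first by exists k.
  by rewrite /coset /stabilizer tg_mulVg; case: Hact.
have [s [Hs1 Hs2]] := HK F oF cov.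
have Hc : forall U, List.In U s -> exists p, forall x, U x -> act x b = p.
  move=> U /Hs1 [k [_ ->]]; exists (act k b) => x; rewrite /coset /stabilizer => Hx.
  by rewrite -{1}(gmulK k x); case: (Hact) => _ ->; rewrite Hx.
have [L [H1 _]] := @list_choice _ _ (fun U p => forall x, U x -> act x b = p) s Hc.
exists L => _ [k [Kk <-]]; have [U [sU Uk]] := Hs2 k Kk.
by have [p [Lp Hp]] := H1 U sU; rewrite (Hp k Uk).
Qed.

(** a group acting with a finite orbit whose stabilizer is compact is compact:
    it is a finite union of cosets of that stabilizer *)
Lemma compact_of_orbit_fin (G : TopGroup) (Om : Type) (act : G -> Om -> Om) (w0 : Om) :
  is_action act -> compact_set (stabilizer act w0) ->
  finite_pred (fun p => exists g, act g w0 = p) -> compact_group G.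
Proof.
move=> Hact HK [P HP].
have Hc : forall p, List.In p P ->
    exists K : G -> Prop, compact_set K /\ forall x, act x w0 = p -> K x.
  move=> p _; case: (classic (exists g, act g w0 = p)) => [[g Hg]|Hn].
    exists (fun x => stabilizer act w0 (tg_mul (tg_inv g) x)); split.
      exact: compact_transl.
    move=> x Hx; rewrite /stabilizer; case: (Hact) => _ ->; rewrite Hx -Hg.
    exact: actKV.
  exists (fun _ => False); split; last by move=> x Hx; apply: Hn; exists x.
  by move=> F _ _; exists nil; split=> // ? [].
have [Ks [H1 H2]] :=
  @list_choice _ _ (fun p K => compact_set K /\ forall x, act x w0 = p -> K x) P Hc.
have HU : compact_set (fun x => exists K, List.In K Ks /\ K x).
  by apply: compact_fin_union => K /H2 [p [_ []]].
move=> F oF cov; have [s [Hs1 Hs2]] := HU F oF (fun x _ => cov x I).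
exists s; split=> // x _; apply: Hs2.
have [K [iK [_ HK']]] := H1 _ (HP _ (ex_intro _ x erefl)).
by exists K; split=> //; apply: HK'.
Qed.

(** the points t = h.b for the elements h sending a to u form a finite set:
    such h make up a coset h0 Stab(a), which is compact *)
Lemma transporter_orbit_fin (G : TopGroup) (Om : Type) (act : G -> Om -> Om) (a b u : Om) :
  is_action act -> compact_set (stabilizer act a) -> tg_open (stabilizer act b) ->
  finite_pred (fun t => exists h, act h a = u /\ act h b = t).
Proof.
move=> Hact Hca Hob.
case: (classic (exists h0, act h0 a = u)) => [[h0 Hh0]|Hn]; last first.
  by exists nil => t [h [Hh _]]; case: Hn; exists h.
have [L0 HL0] := orbit_fin Hact Hca Hob.
exists (List.map (act h0) L0) => _ [h [Hh <-]].
have Hk : stabilizer act a (tg_mul (tg_inv h0) h).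
  by rewrite /stabilizer; case: (Hact) => _ ->; rewrite Hh -Hh0 actKV.
move: (HL0 _ (ex_intro _ _ (conj Hk erefl))) => /(List.in_map (act h0)).
by case: (Hact) => _ <-; rewrite gmulK.
Qed.

Lemma pmod_zero_on (G : TopGroup) (Om : eqType) (act : G -> Om -> Om) (D : Om -> Prop) h f :
  is_action act ->
  zero_on D (pmod_act act h f) = pmod_act act h (zero_on (fun w => D (act h w)) f).
Proof.
move=> Hact; apply: functional_extensionality => w.
by rewrite /zero_on /pmod_act (actK _ _ Hact).
Qed.

Lemma delta_act (G : TopGroup) (Om : eqType) (act : G -> Om -> Om) h v :
  is_action act -> delta (act h v) = pmod_act act h (delta v).
Proof.
move=> Hact; apply: functional_extensionality => w; rewrite /delta /pmod_act.
case: (w =P act h v) => [->|ne]; first by rewrite actKV // eqxx.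
by case: (act (tg_inv h) w =P v) => // E; case: ne; rewrite -E actK.
Qed.

Fixpoint ball (Om : Type) (adj : Om -> Om -> Prop) (w0 : Om) (n : nat) : Om -> Prop :=
  match n with
  | 0 => fun u => u = w0
  | n'.+1 => fun u => ball adj w0 n' u \/ exists u', ball adj w0 n' u' /\ adj u' u
  end.

Lemma ball_mono (Om : Type) (adj : Om -> Om -> Prop) w0 m n u :
  (m <= n)%N -> ball adj w0 m u -> ball adj w0 n u.
Proof.
elim: n => [|n IH]; first by rewrite leqn0 => /eqP ->.
by rewrite leq_eqVlt => /orP[/eqP -> //|]; rewrite ltnS => /IH h /h hb /=; left.
Qed.

Lemma ball_fin (Om : Type) (adj : Om -> Om -> Prop) w0 :
  (forall u, finite_pred (adj u)) -> forall n, finite_pred (ball adj w0 n).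
Proof.
move=> Hl; elim=> [|n [L HL]]; first by exists (w0 :: nil) => u ->; left.
have [L' HL'] := finite_bigcup (l := L) (fun a _ => Hl a).
exists (L ++ L') => u [/HL h|[u' [/HL h1 h2]]]; apply: List.in_or_app; first by left.
by right; apply: HL'; exists u'.
Qed.

Lemma sum_one_nonzero (a : nat -> rat) (W : rat) (N : nat) :
  0 <= W -> (forall k, `|a k| <= W) ->
  (forall k k', (k < k')%N -> a k = 0 \/ a k' = 0) ->
  `|\sum_(k < N) a k| <= W.
Proof.
move=> W0 Hb Hp; elim: N => [|N IH]; first by rewrite big_ord0 normr0.
rewrite big_ord_recr /=; case: (a N =P 0) => [->|ne]; first by rewrite addr0.
by rewrite big1 ?add0r // => k _; case: (Hp k N (ltn_ord k)).
Qed.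

Lemma le_sum_In (T : Type) (f : T -> rat) (l : list T) x :
  (forall y, 0 <= f y) -> List.In x l -> f x <= \sum_(y <- l) f y.
Proof.
move=> H0; elim: l => //= y l IH [->|h]; rewrite big_cons.
  by rewrite lerDl; apply: sumr_ge0.
by apply: le_trans (IH h) _; rewrite lerDr.
Qed.

Section IsoperimetricResolution.
Variables (G : TopGroup) (Om1 Om0 : eqType) (act1 : G -> Om1 -> Om1) (act0 : G -> Om0 -> Om0).
Variables (d1 : (Om1 -> rat) -> (Om0 -> rat)) (d0 : (Om0 -> rat) -> rat).
Hypothesis act1P : is_action act1.
Hypothesis act0P : is_action act0.
Hypothesis stab0P : forall w, tg_open (stabilizer act0 w) /\ compact_set (stabilizer act0 w).
Variable reps : list Om1.
Hypothesis reps_cover : forall v, exists vi h, List.In vi reps /\ act1 h vi = v.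
Hypothesis d1_hom : pmod_hom act1 act0 d1.
Hypothesis d0_hom : aug_hom act0 d0.
Hypothesis exactP : exact_FP1 d1 d0.

Lemma d0_linear : linear_on d0.
Proof. by case: d0_hom. Qed.

Definition bdry (v : Om1) : Om0 -> rat := d1 (delta v).

Lemma finsupp_bdry v : finsupp (bdry v).
Proof. by case: d1_hom => Hf _ _ _; apply/Hf/finsupp_delta. Qed.

Lemma bdry_act h v : bdry (act1 h v) = pmod_act act0 h (bdry v).
Proof.
case: d1_hom => _ _ _ Heq; rewrite /bdry (delta_act _ _ act1P).
by apply: functional_extensionality => w; apply/Heq/finsupp_delta.
Qed.

Lemma d0_bdry v : d0 (bdry v) = 0.
Proof. by case: exactP => _ Hcomp _; apply/Hcomp/finsupp_delta. Qed.

Lemma d0_delta_act h u : d0 (delta (act0 h u)) = d0 (delta u).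
Proof. by case: d0_hom => _ _ Heq; rewrite (delta_act _ _ act0P) Heq //; apply: finsupp_delta. Qed.

Lemma d0_dipole g w0 : d0 (dipole w0 (act0 g w0)) = 0.
Proof.
case: d0_hom => Hadd Hscale _.
rewrite /dipole Hadd ?Hscale ?d0_delta_act ?mulN1r ?subrr //;
  by [apply: finsupp_delta|apply/finsupp_scale/finsupp_delta].
Qed.

(** since d0 is onto Q, some basis vector has nonzero augmentation *)
Lemma exists_d0_nonzero : exists w0, d0 (delta w0) != 0.
Proof.
apply: NNPP => Hn; case: exactP => Hsurj _ _; have [x [fx dx]] := Hsurj 1.
have : d0 x = 0.
  rewrite (lin_expand d0_linear (undup_uniq _) (supp_undup fx)) big1 // => u _.
  have : ~~ (d0 (delta u) != 0) by apply/negP => h; apply: Hn; exists u.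
  by rewrite negbK => /eqP ->; rewrite mulr0.
by rewrite dx => /eqP; rewrite oner_eq0.
Qed.

Definition adjacent (u u' : Om0) : Prop := exists v, bdry v u != 0 /\ bdry v u' != 0.

(** every point has finitely many neighbours: a neighbour of u is h.b where
    h.a = u and a, b lie in the support of the boundary of an orbit representative *)
Lemma adjacent_locally_finite u : finite_pred (adjacent u).
Proof.
pose S := fun vi => undup (supp_seq (bdry vi)).
apply: (finite_sub (Q := fun t => exists vi, List.In vi reps /\
   exists a, List.In a (S vi) /\ exists b, List.In b (S vi) /\
   exists h, act0 h a = u /\ act0 h b = t)); last first.
  apply: finite_bigcup => vi _; apply: finite_bigcup => a _; apply: finite_bigcup => b _.
  by apply: transporter_orbit_fin; [|case: (stab0P a)|case: (stab0P b)].
move=> u' [v [Fu Fu']]; have [vi [h [ri Ev]]] := reps_cover v.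
move: Fu Fu'; rewrite -Ev bdry_act /pmod_act => Fu Fu'.
have inS w : bdry vi w != 0 -> List.In w (S vi).
  by move=> Hw; apply/In_mem/(supp_undup (finsupp_bdry vi)).
exists vi; split=> //; exists (act0 (tg_inv h) u); split; first exact: inS.
exists (act0 (tg_inv h) u'); split; first exact: inS.
by exists h; split; rewrite actK.
Qed.

Lemma far_points : ~ compact_group G -> forall w0 n, exists g, ~ ball adjacent w0 n (act0 g w0).
Proof.
move=> Hnc w0 n; apply: NNPP => Hn; apply: Hnc.
apply: (compact_of_orbit_fin (w0 := w0) act0P (proj2 (stab0P w0))).
apply: (finite_sub _ (ball_fin w0 adjacent_locally_finite n)) => _ [g <-].
by apply: NNPP => Hb; apply: Hn; exists g.
Qed.

(** a bound for |d0| on truncated boundaries, uniform over Om1 by equivariance *)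
Definition weight : rat :=
  \sum_(vi <- reps) \sum_(u <- undup (supp_seq (bdry vi))) `|bdry vi u| * `|d0 (delta u)|.

Lemma weight_ge0 : 0 <= weight.
Proof. by do 2!apply: sumr_ge0 => ? _; apply: mulr_ge0. Qed.

Lemma truncated_bdry_bound D v : `|d0 (zero_on D (bdry v))| <= weight.
Proof.
have [vi [h [ri <-]]] := reps_cover v.
case: d0_hom => _ _ Heq; rewrite bdry_act (pmod_zero_on _ _ _ act0P) Heq; last first.
  exact/finsupp_zero_on/finsupp_bdry.
apply: le_trans (le_sum_In _ ri); last by move=> ?; do 1!apply: sumr_ge0 => ? _; apply: mulr_ge0.
exact: zero_on_bound d0_linear (undup_uniq _) (supp_undup (finsupp_bdry vi)).
Qed.

Definition cut (B : nat -> Om0 -> Prop) (N : nat) (f : Om0 -> rat) : rat :=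
  \sum_(k < N) d0 (zero_on (B k) f).

(** a boundary meets at most two consecutive spheres, so at most one term of
    its cut is nonzero *)
Lemma cut_bdry_bound w0 N v : `|cut (ball adjacent w0) N (bdry v)| <= weight.
Proof.
apply: sum_one_nonzero (fun k => truncated_bdry_bound _ v) _ => [|k k' kk']; first exact: weight_ge0.
case: (classic (exists u, bdry v u != 0 /\ ball adjacent w0 k u)) => [[u [Fu Bu]]|Hn].
  right; rewrite -(lin0 d0_linear); congr d0.
  apply: functional_extensionality => w; rewrite /zero_on.
  case: excluded_middle_informative => [//|nB].
  apply/eqP; apply: contraT => Fw; case: nB.
  by apply: (ball_mono (m := k.+1)) => //=; right; exists u; split=> //; exists v.
left; rewrite -(d0_bdry v); congr d0.
apply: functional_extensionality => w; rewrite /zero_on.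
case: excluded_middle_informative => [Bw|//].
by apply/esym/eqP; apply: contraT => Fw; case: Hn; exists w.
Qed.

Lemma cut_cycle_bound w0 N y :
  finsupp y -> `|cut (ball adjacent w0) N (d1 y)| <= weight * l1norm y.
Proof.
move=> fy; case: d1_hom => Hf Ha Hs _.
have Lcut : linear_on (fun y => cut (ball adjacent w0) N (d1 y)).
  exact: (lin_comp Hf Ha Hs (lin_sum N (fun k => lin_zero_on (ball adjacent w0 k) d0_linear))).
rewrite (lin_expand Lcut (undup_uniq _) (supp_undup fy)) /l1norm mulr_sumr.
apply: le_trans (ler_norm_sum _ _ _) _; apply: ler_sum => v _.
by rewrite normrM mulrC ler_wpM2r // cut_bdry_bound.
Qed.

(** on a dipole with a far end, every term of the cut sees only that end *)
Lemma cut_dipole w0 g N : ~ ball adjacent w0 N (act0 g w0) ->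
  `|cut (ball adjacent w0) N (dipole w0 (act0 g w0))| = N%:R * `|d0 (delta w0)|.
Proof.
move=> far; rewrite /cut.
transitivity `|\sum_(k < N) - d0 (delta w0)|; last first.
  by rewrite sumr_const card_ord normrMn normrN mulr_natl.
congr `|_|; apply: eq_bigr => k _; case: d0_hom => _ Hscale _.
rewrite -(d0_delta_act g) -mulN1r -Hscale; last exact: finsupp_delta.
congr d0; apply: functional_extensionality => w; rewrite /zero_on /dipole /delta.
case: excluded_middle_informative => [Bw|nBw].
  case: (w =P act0 g w0) => [Ew|_]; last by rewrite mulr0.
  by case: far; apply: (ball_mono (m := k)) (ltnW (ltn_ord k)) _; rewrite -Ew.
case: (w =P w0) => [Ew|_]; last by rewrite add0r.
by case: nBw; rewrite Ew; apply: (ball_mono (m := 0)).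
Qed.

(** the hard direction: the isoperimetric inequality with constant C forces
    compactness, by comparing the cut of a far dipole with that of its filling *)
Lemma isoperimetric_compact (C : rat) : 0 < C ->
  (forall x, finsupp x -> d0 x = 0 -> forall eps : rat, 0 < eps ->
     exists y, [/\ finsupp y, (forall w, d1 y w = x w) & l1norm y <= C * l1norm x + eps]) ->
  compact_group G.
Proof.
move=> C0 Hiso; apply: NNPP => Hnc.
have [w0 /negPf c0] := exists_d0_nonzero; set c := d0 (delta w0) in c0.
have cpos : 0 < `|c| by rewrite normr_gt0 c0.
pose N := Num.bound (weight * (2 * C + 1) / `|c|).
have N_large : weight * (2 * C + 1) < N%:R * `|c|.
  rewrite -ltr_pdivrMr //; apply: archi_boundP.
  by rewrite divr_ge0 // mulr_ge0 ?weight_ge0 //; lra.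
have [g far] := far_points Hnc w0 N.
have [y [fy Hy Hly]] := Hiso _ (finsupp_dipole w0 (act0 g w0)) (d0_dipole g w0) 1 ltr01.
have cut_y : N%:R * `|c| <= weight * l1norm y.
  rewrite -(cut_dipole far); have <- : d1 y = dipole w0 (act0 g w0).
    by apply: functional_extensionality.
  exact: cut_cycle_bound.
have Hy_small : l1norm y <= 2 * C + 1.
  by have := l1norm_dipole w0 (act0 g w0); nra.
have := ler_wpM2l weight_ge0 Hy_small; lra.
Qed.

End IsoperimetricResolution.

(** a compact group is compactly generated, and the trivial resolution
    0 -> Q[pt] -> Q -> 0 satisfies the isoperimetric inequality with C = 1 *)
Lemma compact_isoperimetric (G : TopGroup) :
  compact_group G -> compactly_generated G /\ weak_lin_isoperimetric G.
Proof.
move=> HC; split.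
  exists (fun _ => True); split=> // g; exists (g :: nil); split; first by move=> *; left.
  by rewrite /gprod /= tg_mulg1.
pose act := fun (_ : G) (w : unit) => w.
have Hact : is_action act by [].
have Hprop : proper_Gset act.
  split=> // w; have -> : stabilizer act w = (fun _ => True).
    by apply: functional_extensionality => g; apply: propositional_extensionality.
  by split; [apply: tg_open_setT|].
have Hfin : finitely_many_orbits act.
  by exists (tt :: nil) => w; exists tt, (tg_one G); split; [left|case: w].
exists unit, unit, act, act, (fun _ _ => 0), (fun x => x tt); split.
  split=> //.
  - split=> *; [exact: finsupp0|by rewrite /= addr0|by rewrite /= mulr0|by []].
  - split=> [q||x _ H]; last by exists (fun _ => 0); split; [apply: finsupp0|case; rewrite H].
    + by exists (fun _ => q); split=> //; exists (tt :: nil) => -[]; rewrite mem_seq1.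
    + by [].
exists 1; split=> // x _ Hx eps He; exists (fun _ => 0); split.
- exact: finsupp0.
- by case; rewrite Hx.
- have h1 : 0 <= l1norm x by apply: sumr_ge0.
  have -> : l1norm (fun _ : unit => 0 : rat) = 0 by rewrite /l1norm big1 // => *; rewrite normr0.
  lra.
Qed.

Theorem proposition4p7 (G : TopGroup) (HG : TDLC G) :
  compact_group G <-> (compactly_generated G /\ weak_lin_isoperimetric G).
Proof.
split; first exact: compact_isoperimetric.
case=> _ [Om1 [Om0 [act1 [act0 [d1 [d0 [HR [C [C0 Hiso]]]]]]]]].
case: HR => [[[act1P _] [reps reps_cover]] [[act0P stab0P] _] d1_hom d0_hom exactP].
exact: (isoperimetric_compact act1P act0P stab0P reps_cover d1_hom d0_hom exactP C0 Hiso).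
Qed.
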